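(* Let $X$ be a compact Hausdorff space with a continuous injective right action of $P$ such that $X\rtimes P$ admits a Haar system, and put $X_0:=X\,Int(P)$. Let $(s_n)$ be a sequence in $Int(P)$ with $s_{n+1}^{-1}s_n\in Int(P)$ for all $n$ and $s_n\to e$, let $a\in Int(P)$, put $t_n:=s_n^{-1}a$ and assume $t_n\in Int(P)$ for all $n$. Then $X_0t_{n+1}\subset X_0t_n$ for every $n$ and $\bigcap_n X_0t_n=Xa$; i.e. the indicator functions $1_{X_0t_n}$ decrease pointwise to $1_{Xa}$.
   Context: Standing assumptions: $G$ is a second countable locally compact group with left Haar measure $dg$; $P\subset G$ is a closed subsemigroup with identity $e\in P$, such that $G=PP^{-1}$ and the interior $Int(P)$ of $P$ is dense in $P$. For $S\subset X$ and $b\in P$, $Sb=\{yb:y\in S\}$; $X_0=\{xb:x\in X,b\in Int(P)\}$. Semidirect product groupoid: for a compact Hausdorff space $X$ with a continuous right action of $P$ such that each $x\mapsto xa$ is injective, $X\rtimes P:=\{(x,g)\in X\times G:\exists a,b\in P,\ y\in X \text{ with } g=ab^{-1},\ xa=yb\}$, with the subspace topology of $X\times G$ and groupoid operations $(x,g,y)(y,h,z)=(x,gh,z)$, $(x,g,y)^{-1}=(y,g^{-1},x)$. For $x\in X$, $Q_x:=\{g:(x,g)\in X\rtimes P\}$ and $\lambda^x$ is given by $\int\phi\,d\lambda^x=\int\phi(x,g)1_{Q_x}(g)\,dg$. ''$X\rtimes P$ admits a Haar system'' means $x\mapsto\int\phi\,d\lambda^x$ is continuous for every $\phi\in C_c(X\rtimes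 P)$. *)

From Stdlib Require Import Reals List Classical ClassicalEpsilon.
Open Scope R_scope.

Definition is_topology {T : Type} (opn : (T -> Prop) -> Prop) : Prop :=
  opn (fun _ => True) /\
  (forall U V, opn U -> opn V -> opn (fun x => U x /\ V x)) /\
  (forall F : (T -> Prop) -> Prop, (forall U, F U -> opn U) ->
       opn (fun x => exists U, F U /\ U x)).

Definition is_closed {T : Type} (opn : (T -> Prop) -> Prop) (A : T -> Prop) : Prop :=
  opn (fun x => ~ A x).

Definition int_of {T : Type} (opn : (T -> Prop) -> Prop) (A : T -> Prop) (x : T) : Prop :=
  exists U, opn U /\ U x /\ (forall y, U y -> A y).

Definition covered_by {T : Type} (l : list (T -> Prop)) (x : T) : Prop :=
  exists U, In U l /\ U x.

Definition is_compact {T : Type} (opn : (T -> Prop) -> Prop) (K : T -> Prop) : Prop :=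
  forall F : (T -> Prop) -> Prop,
    (forall U, F U -> opn U) ->
    (forall x, K x -> exists U, F U /\ U x) ->
    exists l : list (T -> Prop), Forall F l /\ (forall x, K x -> covered_by l x).

Definition is_hausdorff {T : Type} (opn : (T -> Prop) -> Prop) : Prop :=
  forall x y, x <> y -> exists U V, opn U /\ opn V /\ U x /\ V y /\
    (forall z, U z -> V z -> False).

Definition locally_compact {T : Type} (opn : (T -> Prop) -> Prop) : Prop :=
  forall x, exists U K, opn U /\ U x /\ is_compact opn K /\ (forall y, U y -> K y).

Definition second_countable {T : Type} (opn : (T -> Prop) -> Prop) : Prop :=
  exists B : nat -> (T -> Prop), (forall n, opn (B n)) /\
    (forall U x, opn U -> U x -> exists n, B n x /\ (forall y, B n y -> U y)).

Definition prod_open {T1 T2 : Type} (o1 : (T1 -> Prop) -> Prop) (o2 : (T2 -> Prop) -> Prop)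
  (O : T1 * T2 -> Prop) : Prop :=
  forall z, O z -> exists V W, o1 V /\ o2 W /\ V (fst z) /\ W (snd z) /\
    (forall x y, V x -> W y -> O (x, y)).

Definition seq_conv {T : Type} (opn : (T -> Prop) -> Prop) (u : nat -> T) (l : T) : Prop :=
  forall U, opn U -> U l -> exists N, forall n, (N <= n)%nat -> U (u n).

Definition cont_R {T : Type} (opn : (T -> Prop) -> Prop) (f : T -> R) : Prop :=
  forall x eps, 0 < eps -> exists V, opn V /\ V x /\ (forall y, V y -> Rabs (f y - f x) < eps).

Definition is_top_group {G : Type} (opn : (G -> Prop) -> Prop)
  (mul : G -> G -> G) (inv : G -> G) (e : G) : Prop :=
  is_topology opn /\
  (forall a b c, mul (mul a b) c = mul a (mul b c)) /\
  (forall a, mul e a = a) /\ (forall a, mul a e = a) /\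
  (forall a, mul (inv a) a = e) /\ (forall a, mul a (inv a) = e) /\
  (forall a b U, opn U -> U (mul a b) ->
     exists V W, opn V /\ opn W /\ V a /\ W b /\ (forall c d, V c -> W d -> U (mul c d))) /\
  (forall a U, opn U -> U (inv a) -> exists V, opn V /\ V a /\ (forall c, V c -> U (inv c))).

Definition sigma_algebra {T : Type} (S : (T -> Prop) -> Prop) : Prop :=
  S (fun _ => True) /\
  (forall A, S A -> S (fun x => ~ A x)) /\
  (forall A : nat -> (T -> Prop), (forall n, S (A n)) -> S (fun x => exists n, A n x)).

Definition borel {T : Type} (opn : (T -> Prop) -> Prop) (A : T -> Prop) : Prop :=
  forall S, sigma_algebra S -> (forall U, opn U -> S U) -> S A.

(* a measure takes values in [0, +oo]; None stands for +oo *)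
Definition partial_sum (u : nat -> R) (n : nat) : R := sum_f_R0 u n.

Definition borel_measure {T : Type} (opn : (T -> Prop) -> Prop)
  (mu : (T -> Prop) -> option R) : Prop :=
  mu (fun _ => False) = Some 0 /\
  (forall A r, borel opn A -> mu A = Some r -> 0 <= r) /\
  (forall A : nat -> (T -> Prop),
     (forall n, borel opn (A n)) ->
     (forall n m x, n <> m -> A n x -> A m x -> False) ->
     forall l, mu (fun x => exists n, A n x) = Some l <->
       exists r : nat -> R, (forall n, mu (A n) = Some (r n)) /\ Un_cv (partial_sum r) l).

(* left Haar measure: nonzero left-invariant Borel measure, finite on is_compact sets
   (on a second countable locally is_compact group such a measure is automatically regular) *)
Definition left_haar_measure {G : Type} (opn : (G -> Prop) -> Prop)
  (mul : G -> G -> G) (inv : G -> G) (mu : (G -> Prop) -> option R) : Prop :=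
  borel_measure opn mu /\
  (forall K, is_compact opn K -> exists r, mu K = Some r) /\
  (exists A, borel opn A /\ mu A <> Some 0) /\
  (forall h A, borel opn A -> mu (fun g => A (mul (inv h) g)) = mu A).

Definition indic {T : Type} (A : T -> Prop) (x : T) : R :=
  if excluded_middle_informative (A x) then 1 else 0.

Fixpoint simple_eval {T : Type} (l : list (R * (T -> Prop) * R)) (x : T) : R :=
  match l with
  | nil => 0
  | (c, A, _) :: l' => c * indic A x + simple_eval l' x
  end.

Fixpoint simple_int {T : Type} (l : list (R * (T -> Prop) * R)) : R :=
  match l with
  | nil => 0
  | (c, _, r) :: l' => c * r + simple_int l'
  end.

Definition lower_sums {T : Type} (opn : (T -> Prop) -> Prop)
  (mu : (T -> Prop) -> option R) (f : T -> R) (s : R) : Prop :=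
  exists l : list (R * (T -> Prop) * R),
    Forall (fun t => match t with (c, A, r) => 0 <= c /\ borel opn A /\ mu A = Some r end) l /\
    (forall x, simple_eval l x <= f x) /\ s = simple_int l.

Definition lintegral {T : Type} (opn : (T -> Prop) -> Prop)
  (mu : (T -> Prop) -> option R) (f : T -> R) (v : R) : Prop :=
  is_lub (lower_sums opn mu f) v.

Definition in_grpd {X G : Type} (P : G -> Prop) (mul : G -> G -> G) (inv : G -> G)
  (act : X -> G -> X) (x : X) (g : G) : Prop :=
  exists a b y, P a /\ P b /\ g = mul a (inv b) /\ act x a = act y b.

(* phi : X -> G -> R represents a function on X ⋊ P (values off X ⋊ P are irrelevant);
   C_c(X ⋊ P): continuous for the subspace topology, vanishing off a is_compact subset *)
Definition Cc_grpd {X G : Type} (openX : (X -> Prop) -> Prop) (openG : (G -> Prop) -> Prop)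
  (P : G -> Prop) (mul : G -> G -> G) (inv : G -> G) (act : X -> G -> X)
  (phi : X -> G -> R) : Prop :=
  (forall x g eps, in_grpd P mul inv act x g -> 0 < eps ->
     exists V W, openX V /\ openG W /\ V x /\ W g /\
       (forall y h, V y -> W h -> in_grpd P mul inv act y h -> Rabs (phi y h - phi x g) < eps)) /\
  (exists K : X * G -> Prop,
     is_compact (prod_open openX openG) K /\
     (forall z, K z -> in_grpd P mul inv act (fst z) (snd z)) /\
     (forall x g, in_grpd P mul inv act x g -> ~ K (x, g) -> phi x g = 0)).

Definition grpd_integrand {X G : Type} (P : G -> Prop) (mul : G -> G -> G) (inv : G -> G)
  (act : X -> G -> X) (phi : X -> G -> R) (x : X) (g : G) : R :=
  if excluded_middle_informative (in_grpd P mul inv act x g) then phi x g else 0.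

(* X ⋊ P admits a Haar system: for every phi in C_c(X ⋊ P), x |-> ∫ phi d lambda^x
   (defined, and) continuous *)
Definition admits_haar_system {X G : Type} (openX : (X -> Prop) -> Prop)
  (openG : (G -> Prop) -> Prop) (mu : (G -> Prop) -> option R)
  (P : G -> Prop) (mul : G -> G -> G) (inv : G -> G) (act : X -> G -> X) : Prop :=
  forall phi, Cc_grpd openX openG P mul inv act phi ->
    exists F : X -> R, cont_R openX F /\
      forall x, exists v1 v2,
        lintegral openG mu (fun g => Rmax 0 (grpd_integrand P mul inv act phi x g)) v1 /\
        lintegral openG mu (fun g => Rmax 0 (- grpd_integrand P mul inv act phi x g)) v2 /\
        F x = v1 - v2.

Definition X0 {X G : Type} (openG : (G -> Prop) -> Prop) (P : G -> Prop)
  (act : X -> G -> X) (y : X) : Prop :=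
  exists x b, int_of openG P b /\ y = act x b.

Definition set_act {X G : Type} (S : X -> Prop) (act : X -> G -> X) (b : G) (y : X) : Prop :=
  exists z, S z /\ y = act z b.

(* Inclusion: since [t_(n+1) = (s_(n+1)^-1 s_n) t_n] with [s_(n+1)^-1 s_n] interior,
   [X0 t_(n+1)] lies in [X0 t_n]; likewise [X a = X s_n t_n] lies in every [X0 t_n].
   Intersection: if [y = z_n t_n] for all [n], compactness of [X] gives a cluster point
   [w] of [(z_n)]; since [t_n -> a] and the action is jointly continuous, [w a] lies in
   every neighbourhood of [y], so [y = w a] by the Hausdorff property. *)

From Stdlib Require Import Reals Lia Classical List.

Lemma int_of_subset {T : Type} (opn : (T -> Prop) -> Prop) (A : T -> Prop) (x : T) :
  int_of opn A x -> A x.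
Proof. intros [U [_ [HUx HUA]]]. exact (HUA x HUx). Qed.

Section TopGroup.

Variables (G : Type) (openG : (G -> Prop) -> Prop) (mul : G -> G -> G) (inv : G -> G) (e : G).
Hypothesis HG : is_top_group openG mul inv e.

Lemma mul_inv_cancel_l (b c : G) : mul b (mul (inv b) c) = c.
Proof.
  destruct HG as [_ [Hassoc [Hlid [_ [_ [Hrinv _]]]]]].
  rewrite <- Hassoc, Hrinv, Hlid. reflexivity.
Qed.

Lemma mul_mul_inv_cancel (b c d : G) : mul (mul b c) (mul (inv c) d) = mul b d.
Proof.
  destruct HG as [_ [Hassoc _]].
  rewrite Hassoc, mul_inv_cancel_l. reflexivity.
Qed.

Lemma inv_e : inv e = e.
Proof.
  destruct HG as [_ [_ [_ [Hrid [Hlinv _]]]]].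
  rewrite <- (Hrid (inv e)). apply Hlinv.
Qed.

Lemma seq_conv_inv_mul (s : nat -> G) (a : G) :
  seq_conv openG s e -> seq_conv openG (fun n => mul (inv (s n)) a) a.
Proof.
  destruct HG as [_ [_ [Hlid [_ [_ [_ [Hmulc Hinvc]]]]]]].
  intros Hs W HW HWa.
  assert (HWa' : W (mul (inv e) a)) by (rewrite inv_e, Hlid; exact HWa).
  destruct (Hmulc (inv e) a W HW HWa') as [V1 [W1 [HV1 [_ [HV1e [HW1a Hprod]]]]]].
  destruct (Hinvc e V1 HV1 HV1e) as [V2 [HV2 [HV2e HV2inv]]].
  destruct (Hs V2 HV2 HV2e) as [N HN].
  exists N. intros n Hn. apply Hprod; [apply HV2inv, HN, Hn | exact HW1a].
Qed.

End TopGroup.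

Section Compact.

Variables (X : Type) (openX : (X -> Prop) -> Prop).
Hypothesis HXcpt : is_compact openX (fun _ => True).

Lemma eventually_forall_list (Q : nat -> (X -> Prop) -> Prop) (l : list (X -> Prop)) :
  (forall U m n, (m <= n)%nat -> Q m U -> Q n U) ->
  Forall (fun U => exists N, Q N U) l ->
  exists N, forall U, In U l -> Q N U.
Proof.
  intros Hmono Hl. induction Hl as [|U l [N1 HN1] _ [N2 HN2]].
  - exists 0%nat. intros U [].
  - exists (Nat.max N1 N2). intros U' [<-|HU'].
    + apply (Hmono U N1); [lia | exact HN1].
    + apply (Hmono U' N2); [lia | exact (HN2 U' HU')].
Qed.

Lemma compact_cluster_point (R : nat -> X -> Prop) :
  (forall n, exists z, R n z) ->
  exists w, forall V, openX V -> V w ->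
    forall N, exists n, (N <= n)%nat /\ exists z, V z /\ R n z.
Proof.
  intros HR. apply NNPP. intro Hno.
  set (avoids := fun N U => forall n, (N <= n)%nat -> forall z, U z -> ~ R n z).
  set (F := fun U => openX U /\ exists N, avoids N U).
  assert (Hcov : forall x, True -> exists U, F U /\ U x).
  { intros x _. apply NNPP. intro Hx. apply Hno. exists x.
    intros V HV HVx N. apply NNPP. intro HN. apply Hx. exists V.
    split; [|exact HVx]. split; [exact HV|]. exists N.
    intros n Hn z Hz Hy. apply HN. exists n. split; [exact Hn|]. exists z. auto. }
  destruct (HXcpt F (fun U HU => proj1 HU) Hcov) as [l [Hl Hlcov]].
  destruct (eventually_forall_list avoids l) as [N HN].
  - intros U m n Hmn HU k Hk. apply HU. lia.
  - apply (Forall_impl _ (fun U HU => proj2 HU) Hl).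
  - destruct (HR N) as [z Hz].
    destruct (Hlcov z I) as [U [HUl HUz]].
    exact (HN U HUl N (le_n N) z HUz Hz).
Qed.

End Compact.

Section Action.

Variables (G : Type) (openG : (G -> Prop) -> Prop) (mul : G -> G -> G) (inv : G -> G)
  (P : G -> Prop) (X : Type) (openX : (X -> Prop) -> Prop) (act : X -> G -> X).
Hypothesis Hact_mul : forall x a b, P a -> P b -> act (act x a) b = act x (mul a b).

Lemma set_act_X0_of_mul (S : X -> Prop) (c d : G) (y : X) :
  int_of openG P c -> P d ->
  set_act S act (mul c d) y -> set_act (X0 openG P act) act d y.
Proof.
  intros Hc Hd [z [_ Hy]].
  exists (act z c). split.
  - exists z, c. auto.
  - rewrite Hy, Hact_mul; [reflexivity | exact (int_of_subset _ _ _ Hc) | exact Hd].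
Qed.

Hypothesis HXhaus : is_hausdorff openX.
Hypothesis Hact_cont : forall x p U, P p -> openX U -> U (act x p) ->
  exists V W, openX V /\ openG W /\ V x /\ W p /\
    (forall y q, V y -> W q -> P q -> U (act y q)).

Lemma act_cluster_limit (t : nat -> G) (a : G) (y w : X) :
  seq_conv openG t a -> (forall n, P (t n)) -> P a ->
  (forall V, openX V -> V w ->
     forall N, exists n, (N <= n)%nat /\ exists z, V z /\ y = act z (t n)) ->
  act w a = y.
Proof.
  intros Hconv Ht Ha Hw. apply NNPP. intro Hne.
  destruct (HXhaus (act w a) y Hne) as [U [U' [HU [_ [HUw [HU'y Hdisj]]]]]].
  destruct (Hact_cont w a U Ha HU HUw) as [V [W [HV [HW [HVw [HWa HVW]]]]]].
  destruct (Hconv W HW HWa) as [N HN].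
  destruct (Hw V HV HVw N) as [n [Hn [z [Hz Hy]]]].
  apply (Hdisj y); [|exact HU'y].
  rewrite Hy. apply HVW; [exact Hz | apply HN, Hn | apply Ht].
Qed.

End Action.

Theorem mainTheorem13
  (* the group G *)
  (G : Type) (openG : (G -> Prop) -> Prop) (mul : G -> G -> G) (inv : G -> G) (e : G)
  (HG : is_top_group openG mul inv e) (HGhaus : is_hausdorff openG)
  (HGlc : locally_compact openG) (HG2 : second_countable openG)
  (mu : (G -> Prop) -> option R) (Hmu : left_haar_measure openG mul inv mu)
  (* the semigroup P *)
  (P : G -> Prop) (HPclosed : is_closed openG P)
  (HPmul : forall a b, P a -> P b -> P (mul a b)) (HPe : P e)
  (HPgen : forall g, exists a b, P a /\ P b /\ g = mul a (inv b))
  (HPdense : forall p, P p -> forall U, openG U -> U p ->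
               exists q, U q /\ int_of openG P q)
  (* the space X with a right action of P *)
  (X : Type) (openX : (X -> Prop) -> Prop) (HXtop : is_topology openX)
  (HXcpt : is_compact openX (fun _ => True)) (HXhaus : is_hausdorff openX)
  (act : X -> G -> X)
  (Hact_e : forall x, act x e = x)
  (Hact_mul : forall x a b, P a -> P b -> act (act x a) b = act x (mul a b))
  (Hact_cont : forall x p U, P p -> openX U -> U (act x p) ->
     exists V W, openX V /\ openG W /\ V x /\ W p /\
       (forall y q, V y -> W q -> P q -> U (act y q)))
  (Hact_inj : forall a x y, P a -> act x a = act y a -> x = y)
  (Hhaar : admits_haar_system openX openG mu P mul inv act)
  (* the sequences *)
  (s : nat -> G) (a : G)
  (Hs : forall n, int_of openG P (s n))
  (Hs_step : forall n, int_of openG P (mul (inv (s (S n))) (s n)))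
  (Hs_lim : seq_conv openG s e)
  (Ha : int_of openG P a)
  (Ht : forall n, int_of openG P (mul (inv (s n)) a)) :
  (forall n y, set_act (X0 openG P act) act (mul (inv (s (S n))) a) y ->
               set_act (X0 openG P act) act (mul (inv (s n)) a) y) /\
  (forall y, (forall n, set_act (X0 openG P act) act (mul (inv (s n)) a) y) <->
             set_act (fun _ => True) act a y).
Proof.
  pose proof (fun n => int_of_subset _ _ _ (Ht n)) as HtP.
  split; [|intros y; split].
  - intros n y Hy. eapply (set_act_X0_of_mul _ _ _ _ _ _ Hact_mul _ (mul (inv (s (S n))) (s n)));
      [apply Hs_step | apply HtP |].
    rewrite (mul_mul_inv_cancel G openG mul inv e HG). exact Hy.
  - intros Hy.
    destruct (compact_cluster_point X openX HXcpt (fun n z => y = act z (mul (inv (s n)) a)))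
      as [w Hw].
    { intros n. destruct (Hy n) as [z [_ Hz]]. exists z. exact Hz. }
    exists w. split; [exact I|].
    symmetry. apply (act_cluster_limit G openG P X openX act HXhaus Hact_cont
                       (fun n => mul (inv (s n)) a)); auto.
    + exact (seq_conv_inv_mul G openG mul inv e HG s a Hs_lim).
    + exact (int_of_subset _ _ _ Ha).
  - intros Hy n. eapply (set_act_X0_of_mul _ _ _ _ _ _ Hact_mul _ (s n)); [apply Hs | apply HtP |].
    rewrite (mul_inv_cancel_l G openG mul inv e HG). exact Hy.
Qed.
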